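(* Let $y_{1:n}$ be data, $\mathcal{C}$ a real-valued cost function on contiguous segments $y_{(a+1):b}$, $\beta>0$ a constant, and $f$ a concave differentiable real function (on an interval containing $\{0,1,\ldots,n-1\}$) with derivative $f'$. For a segmentation with $m$ changepoints $0=\tau_0<\tau_1<\cdots<\tau_m<\tau_{m+1}=n$ consider the criterion $$\beta f(m)+\sum_{i=1}^{m+1}\mathcal{C}(y_{(\tau_{i-1}+1):\tau_i}),$$ and let $\hat m$ be the value of $m$ for which this criterion is minimised (over all $m$ and changepoint positions). Then the optimal segmentation under this criterion is a segmentation that minimises, over all $m$ and changepoint positions, $$m\,\beta f'(\hat m)+\sum_{i=1}^{m+1}\mathcal{C}(y_{(\tau_{i-1}+1):\tau_i}).$$
   Context: Segments are $y_{(\tau_{i-1}+1):\tau_i}=(y_{\tau_{i-1}+1},\ldots,y_{\tau_i})$; changepoints are integers in $\{1,\ldots,n-1\}$. *)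

From HB Require Import structures.
From mathcomp Require Import all_boot all_order all_algebra.
From mathcomp Require Import all_classical all_reals all_analysis.
Set Implicit Arguments. Unset Strict Implicit. Unset Printing Implicit Defensive.
Import Order.TTheory GRing.Theory Num.Theory.
Local Open Scope ring_scope.

Definition is_seg (n : nat) (tau : seq nat) : bool :=
  sorted ltn tau && all (fun t => (0 < t < n)%N) tau.

(* segment y_{(a+1):b} of the data y = (y_1,...,y_n) *)
Definition segment (T : Type) (y : seq T) (a b : nat) : seq T :=
  drop a (take b y).

Definition seg_cost (R : numDomainType) (T : Type) (C : seq T -> R)
    (y : seq T) (tau : seq nat) : R :=
  \sum_(p <- zip (0%N :: tau) (rcons tau (size y))) C (segment y p.1 p.2).

Definition concave_on (R : realType) (a b : R) (f : R -> R) : Prop :=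
  forall x z t, a < x < b -> a < z < b -> 0 <= t <= 1 ->
    t * f x + (1 - t) * f z <= f (t * x + (1 - t) * z).

Definition crit_f (R : realType) (T : Type) (C : seq T -> R) (y : seq T)
    (beta : R) (f : R -> R) (tau : seq nat) : R :=
  beta * f (size tau)%:R + seg_cost C y tau.

Definition crit_lin (R : realType) (T : Type) (C : seq T -> R) (y : seq T)
    (beta : R) (f : R -> R) (mhat : nat) (tau : seq nat) : R :=
  (size tau)%:R * beta * derive1 f mhat%:R + seg_cost C y tau.

From HB Require Import structures.
From mathcomp Require Import all_boot all_order all_algebra.
From mathcomp Require Import all_classical all_reals all_analysis.
From mathcomp Require Import ring lra.
Set Implicit Arguments. Unset Strict Implicit. Unset Printing Implicit Defensive.
Import Order.TTheory GRing.Theory Num.Theory.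
Local Open Scope ring_scope.
Local Open Scope classical_set_scope.

(* A concave f lies below its tangent line at mhat, f m <= f mhat + f'(mhat) (m - mhat).
   Replacing the penalty beta f(m) by the linear penalty m beta f'(mhat) therefore
   lowers the criterion of every segmentation relative to that of the optimal one
   by at least as much as it lowers the optimum, so the optimum stays optimal. *)

Lemma is_seg_size_le n tau : is_seg n tau -> (size tau <= n.-1)%N.
Proof.
case/andP=> sorted_tau /allP tau_in.
have uniq_tau : uniq tau by apply: (sorted_uniq ltn_trans ltnn).
rewrite -[n.-1](size_iota 1); apply: uniq_leq_size => // t /tau_in /andP[t_gt0 t_lt].
by rewrite mem_iota t_gt0 add1n prednK // (leq_trans _ t_lt).
Qed.

Lemma derive1_cvg_quotient (R : realType) (f : R -> R) x :
  derivable f x 1 -> (fun h => h^-1 * (f (h + x) - f x)) @ 0^' --> derive1 f x.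
Proof.
by rewrite derive1E /derivable /derive /=; under eq_fun do rewrite /= scaler1.
Qed.

Section ConcaveTangent.
Variables (R : realType) (a b : R) (f : R -> R).
Hypothesis concave_f : concave_on a b f.

Lemma concave_chord_le x z t : a < x < b -> a < z < b -> 0 <= t <= 1 ->
  t * (f z - f x) <= f (x + t * (z - x)) - f x.
Proof.
move=> x_ab z_ab t01; rewrite lerBrDr.
have -> : x + t * (z - x) = t * z + (1 - t) * x by ring.
have -> : t * (f z - f x) + f x = t * f z + (1 - t) * f x by ring.
exact: concave_f.
Qed.

Lemma concave_slope_le_quotient x z h : a < x < b -> a < z < b ->
  0 < h / (z - x) < 1 -> h * ((f z - f x) / (z - x)) <= f (h + x) - f x.
Proof.
move=> x_ab z_ab /andP[t_gt0 t_lt1].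
have zx_neq0 : z - x != 0 by apply: contraTneq t_gt0 => ->; rewrite invr0 mulr0 ltxx.
have := concave_chord_le (t := h / (z - x)) x_ab z_ab.
rewrite (ltW t_gt0) (ltW t_lt1) divfK // [x + h]addrC => /(_ isT).
by rewrite mulrA mulrAC.
Qed.

Lemma concave_derive1_le_slope x z : a < x < b -> a < z < b -> z < x ->
  derivable f x 1 -> derive1 f x <= (f z - f x) / (z - x).
Proof.
move=> x_ab z_ab z_lt_x df.
have zx_lt0 : z - x < 0 by rewrite subr_lt0.
have dL := @cvg_dnbhs_at_left R R^o _ 0 _ (derive1_cvg_quotient df).
apply: (cvgr_to_le dL); near=> h.
have h_lt0 : h < 0 by near: h; exact: nbhs_left_lt.
have zx_lt_h : z - x < h by near: h; exact: nbhs_left_gt.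
have := concave_slope_le_quotient (h := h) x_ab z_ab.
rewrite ltr_ndivrMr // ltr_ndivlMr // mul1r mul0r h_lt0 zx_lt_h => /(_ isT).
by rewrite ler_ndivrMl ?invr_lt0 // invrK mulrC.
Unshelve. all: by end_near.
Qed.

Lemma concave_slope_le_derive1 x z : a < x < b -> a < z < b -> x < z ->
  derivable f x 1 -> (f z - f x) / (z - x) <= derive1 f x.
Proof.
move=> x_ab z_ab x_lt_z df.
have zx_gt0 : 0 < z - x by rewrite subr_gt0.
have dR := @cvg_dnbhs_at_right R R^o _ 0 _ (derive1_cvg_quotient df).
apply: (cvgr_to_ge dR); near=> h.
have h_gt0 : 0 < h by near: h; exact: nbhs_right_gt.
have h_lt_zx : h < z - x by near: h; exact: nbhs_right_lt.
have := concave_slope_le_quotient (h := h) x_ab z_ab.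
rewrite divr_gt0 // ltr_pdivrMr // mul1r h_lt_zx => /(_ isT).
by rewrite ler_pdivlMl ?invr_gt0 // invrK mulrC.
Unshelve. all: by end_near.
Qed.

Lemma concave_le_tangent x z : a < x < b -> a < z < b -> derivable f x 1 ->
  f z <= f x + derive1 f x * (z - x).
Proof.
move=> x_ab z_ab df; rewrite -lerBlDl.
case: (ltgtP z x) => [z_lt_x | x_lt_z | ->]; last by rewrite !subrr mulr0.
- rewrite -ler_ndivlMr ?subr_lt0 //.
  exact: concave_derive1_le_slope.
- rewrite -ler_pdivrMr ?subr_gt0 //.
  exact: concave_slope_le_derive1.
Qed.

End ConcaveTangent.

Lemma linear_penalty_le (R : realFieldType) (beta D fm fmh m mh s s' : R) :
  0 <= beta -> fm <= fmh + D * (m - mh) ->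
  beta * fmh + s <= beta * fm + s' -> mh * beta * D + s <= m * beta * D + s'.
Proof.
move=> beta_ge0 /(ler_wpM2l beta_ge0) tangent opt.
have -> : m * beta * D = beta * (fmh + D * (m - mh)) - beta * fmh + mh * beta * D by ring.
lra.
Qed.

Theorem theorem3 (R : realType) (T : Type) (y : seq T) (C : seq T -> R)
    (beta : R) (f : R -> R) (a b : R) :
  (0 < size y)%N -> 0 < beta ->
  a < 0 -> (size y).-1%:R < b ->
  concave_on a b f ->
  (forall x, a < x < b -> derivable f x 1) ->
  forall tauhat : seq nat, is_seg (size y) tauhat ->
  (forall tau, is_seg (size y) tau ->
     crit_f C y beta f tauhat <= crit_f C y beta f tau) ->
  forall tau, is_seg (size y) tau ->
     crit_lin C y beta f (size tauhat) tauhat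
       <= crit_lin C y beta f (size tauhat) tau.
Proof.
move=> _ beta_gt0 a_lt0 n_lt_b concave_f df tauhat seg_tauhat opt tau seg_tau.
have size_ab t : is_seg (size y) t -> a < (size t)%:R < b.
  move=> /is_seg_size_le size_le; rewrite (lt_le_trans a_lt0) //=.
  by apply: le_lt_trans n_lt_b; rewrite ler_nat.
apply: linear_penalty_le (ltW beta_gt0) _ (opt tau seg_tau).
have tauhat_ab := size_ab _ seg_tauhat.
exact: (concave_le_tangent concave_f tauhat_ab (size_ab _ seg_tau) (df _ tauhat_ab)).
Qed.
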